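(* Let $\nu\ge0$, $K>\nu+1$, and let $r>0$ satisfy $r=\Psi_\nu(2Kr)$, where $\Psi_\nu(x)=I_{\nu+1}(x)/I_\nu(x)$. Then $$r<\sqrt{1-\frac{1}{2K}}.$$
   Context: $I_\nu$ denotes the modified Bessel function of the first kind of order $\nu$. *)

From Stdlib Require Import Reals.
From Coquelicot Require Import Coquelicot.
Open Scope R_scope.

Definition Gamma (s : R) : R :=
  RInt_gen (fun t => Rpower t (s - 1) * exp (- t)) (at_right 0) (Rbar_locally p_infty).

Definition BesselI (nu x : R) : R :=
  Series (fun k : nat =>
    Rpower (x / 2) (2 * INR k + nu) / (INR (Stdlib.Arith.Factorial.fact k) * Gamma (INR k + nu + 1))).

Definition Psi (nu x : R) : R := BesselI (nu + 1) x / BesselI nu x.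

(* Put y = K r and a_k = y^(2k+nu) / (k! (nu+1)_k).  By Gamma(s+1) = s Gamma(s),
   I_nu(2y) = S / Gamma(nu+1) and I_(nu+1)(2y) = y U / Gamma(nu+1), where S = sum a_k and
   U = sum a_k / (k+nu+1), so the equation r = Psi_nu(2Kr) reads S = K U.
   The recurrence (k+1)(k+nu+1) a_(k+1) = y^2 a_k gives sum k a_k = y^2 U and
   sum k(k+nu) a_k = y^2 S, so y^2 (S^2 - y^2 U^2 - U S / 2) is a series whose n-th term
   is a sum over the products a_j a_(n-j).  Two telescoping identities show that this term
   is a nonnegative multiple of sum_j a_j a_(n-j), and it is positive for n = 1.  Hence
   y^2 U^2 + U S / 2 < S^2, which for S = K U is r^2 < 1 - 1/(2K). *)
From Stdlib Require Import Reals Lra Lia Factorial ZArith.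
From Coquelicot Require Import Coquelicot.
Open Scope R_scope.

Lemma Rpower_gt_0 x p : 0 < Rpower x p.
Proof. apply exp_pos. Qed.

Lemma exp_le_exp_of_le a b : a <= b -> exp a <= exp b.
Proof.
  intros [Hab | ->]; [left; now apply exp_increasing | apply Rle_refl].
Qed.

Lemma Rpower_le_Rpower_base_le_1 t p q :
  0 < t <= 1 -> q <= p -> Rpower t p <= Rpower t q.
Proof.
  intros Ht Hqp. apply exp_le_exp_of_le.
  assert (ln t <= 0) by (rewrite <- ln_1; apply ln_le; lra).
  nra.
Qed.

Lemma pow_div_fact_le_exp t N : 0 <= t -> t ^ N / INR (fact N) <= exp t.
Proof.
  intros Ht. eapply Rle_trans; [| apply (exp_ge_taylor t N Ht)].
  destruct N as [| N]; [simpl; lra |].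
  rewrite tech5.
  assert (0 <= sum_f_R0 (fun k => t ^ k / INR (fact k)) N).
  { apply cond_pos_sum; intros k.
    apply Rdiv_le_0_compat; [apply pow_le; lra | apply lt_0_INR, lt_O_fact]. }
  lra.
Qed.

(* Compare with the Taylor term [t ^ N / N!] of [exp t] for an integer [N >= p + 2]. *)
Lemma Rpower_mul_exp_le_inv_sqr p : 0 <= p ->
  exists C, forall t, 1 <= t -> Rpower t p * exp (- t) <= C / t ^ 2.
Proof.
  intros Hp. destruct (archimed (p + 2)) as [Hup _].
  set (N := Z.to_nat (up (p + 2))).
  assert (HN : p + 2 <= INR N).
  { unfold N. rewrite INR_IZR_INZ, Z2Nat.id; [lra |].
    apply le_IZR. lra. }
  assert (Hfact : 0 < INR (fact N)) by apply lt_0_INR, lt_O_fact.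
  exists (INR (fact N)). intros t Ht.
  assert (HtN : 0 < t ^ N) by (apply pow_lt; lra).
  assert (Ht2 : 0 < t ^ 2) by (apply pow_lt; lra).
  assert (Hpow : Rpower t p * t ^ 2 <= t ^ N).
  { rewrite <- !Rpower_pow, <- Rpower_plus by lra.
    apply Rle_Rpower; [lra | simpl; lra]. }
  assert (Hexp : t ^ N <= INR (fact N) * exp t).
  { pose proof (pow_div_fact_le_exp t N ltac:(lra)).
    replace (t ^ N) with (INR (fact N) * (t ^ N / INR (fact N))) by (field; lra).
    apply Rmult_le_compat_l; lra. }
  rewrite exp_Ropp.
  assert (0 < exp t) by apply exp_pos.
  apply (Rmult_le_reg_r (t ^ 2 * exp t)); [nra |].
  replace (Rpower t p * / exp t * (t ^ 2 * exp t)) with (Rpower t p * t ^ 2) by (field; lra).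
  replace (INR (fact N) / t ^ 2 * (t ^ 2 * exp t)) with (INR (fact N) * exp t) by (field; lra).
  lra.
Qed.

Lemma locally_gt_0 x : 0 < x -> locally x (fun y => 0 < y).
Proof.
  intros Hx. apply (locally_open (fun y => 0 < y)); [apply open_gt | trivial | exact Hx].
Qed.

Lemma filter_prod_between_pos (P : R -> Prop) : (forall x, 0 < x -> P x) ->
  filter_prod (at_right 0) (Rbar_locally p_infty) (fun ab =>
    forall x, Rmin (fst ab) (snd ab) <= x <= Rmax (fst ab) (snd ab) -> P x).
Proof.
  intros HP. apply Filter_prod with (fun a => 0 < a) (fun b => 0 < b).
  - exists (mkposreal 1 Rlt_0_1). now intros y _ Hy.
  - now exists 0.
  - intros a b Ha Hb; simpl; intros x [Hx _]. apply HP.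
    assert (Rmin a b > 0) by now apply Rmin_Rgt_r. lra.
Qed.

Lemma is_RInt_gen_0_p_infty_derive (f F : R -> R) (la lb : R) :
  (forall x, 0 < x -> is_derive F x (f x)) ->
  (forall x, 0 < x -> continuous f x) ->
  filterlim F (at_right 0) (locally la) ->
  filterlim F (Rbar_locally p_infty) (locally lb) ->
  is_RInt_gen f (at_right 0) (Rbar_locally p_infty) (lb - la).
Proof.
  intros HF Hf Hla Hlb.
  apply is_RInt_gen_ext with (Derive F).
  { apply filter_imp with (2 := filter_prod_between_pos _ (fun x Hx => is_derive_unique _ _ _ (HF x Hx))).
    intros ab Hab x Hx. apply Hab; lra. }
  apply is_RInt_gen_Derive; trivial.
  - apply filter_prod_between_pos. intros x Hx. eexists. now apply HF.
  - apply filter_prod_between_pos. intros x Hx.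
    apply continuous_ext_loc with f; [| now apply Hf].
    apply filter_imp with (fun y => 0 < y).
    + intros y Hy. symmetry. now apply is_derive_unique, HF.
    + now apply locally_gt_0.
Qed.

Lemma is_RInt_const_div_sqr C u v : 0 < u -> 0 < v ->
  is_RInt (fun t => C / t ^ 2) u v (C / u - C / v).
Proof.
  intros Hu Hv.
  assert (Hm : 0 < Rmin u v) by now apply Rmin_glb_lt.
  replace (C / u - C / v) with (minus (- C / v) (- C / u))
    by (unfold minus, plus, opp; simpl; field; lra).
  apply (@is_RInt_derive R_CompleteNormedModule (fun t => - C / t)).
  - intros x Hx. auto_derive; [lra | field; lra].
  - intros x Hx. apply (ex_derive_continuous (fun t => C / t ^ 2)).
    auto_derive. apply Rgt_not_eq. nra.
Qed.

Section ImproperIntegral.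

Variable f : R -> R.
Hypothesis f_cont : forall t, 0 < t -> continuous f t.

Lemma ex_RInt_pos a b : 0 < a -> 0 < b -> ex_RInt f a b.
Proof.
  intros Ha Hb. apply (@ex_RInt_continuous R_CompleteNormedModule). intros z Hz. apply f_cont.
  assert (0 < Rmin a b) by now apply Rmin_glb_lt. lra.
Qed.

Lemma RInt_1_sub u v : 0 < u -> 0 < v -> RInt f 1 v - RInt f 1 u = RInt f u v.
Proof.
  intros Hu Hv.
  rewrite <- (@RInt_Chasles R_CompleteNormedModule f 1 u v) by (apply ex_RInt_pos; lra).
  unfold plus; simpl. ring.
Qed.

Lemma ball_RInt_1_of_le (P : R -> Prop) (eps : R) :
  (forall u, P u -> 0 < u) ->
  (forall u v, P u -> P v -> u <= v -> Rabs (RInt f u v) < eps) ->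
  forall u v, P u -> P v -> ball (RInt f 1 u) eps (RInt f 1 v).
Proof.
  intros Hpos Hle u v Hu Hv.
  change (Rabs (RInt f 1 v - RInt f 1 u) < eps).
  pose proof (Hpos u Hu). pose proof (Hpos v Hv).
  rewrite RInt_1_sub by assumption.
  destruct (Rle_dec u v) as [Huv | Hvu]; [now apply Hle |].
  rewrite <- (@opp_RInt_swap R_CompleteNormedModule) by (apply ex_RInt_pos; assumption).
  unfold opp; simpl. rewrite Rabs_Ropp. apply Hle; trivial. lra.
Qed.

Lemma RInt_1_cvg_at_right_0 (M : R) :
  (forall t, 0 < t <= 1 -> Rabs (f t) <= M) ->
  exists l, filterlim (RInt f 1) (at_right 0) (locally l).
Proof.
  intros HM. apply (Hierarchy.filterlim_locally_cauchy (F := at_right 0)).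
  intros eps. set (d := Rmin 1 (eps / (Rabs M + 1))).
  assert (Hd : 0 < d).
  { apply Rmin_glb_lt; [lra |]. apply Rdiv_lt_0_compat; [apply cond_pos |].
    pose proof (Rabs_pos M). lra. }
  exists (fun u => 0 < u < d). split.
  - exists (mkposreal d Hd). intros y Hy Hy0. change (Rabs (y - 0) < d) in Hy.
    rewrite Rminus_0_r, Rabs_pos_eq in Hy; lra.
  - apply ball_RInt_1_of_le; [intros u Hu; lra |].
    intros u v Hu Hv Huv.
    assert (d <= 1) by apply Rmin_l.
    assert (Hde : d * (Rabs M + 1) <= eps).
    { pose proof (Rabs_pos M).
      replace (pos eps) with (eps / (Rabs M + 1) * (Rabs M + 1)) by (field; lra).
      apply Rmult_le_compat_r; [lra | apply Rmin_r]. }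
    eapply Rle_lt_trans.
    { apply abs_RInt_le_const with (M := M); [assumption | apply ex_RInt_pos; lra |].
      intros t Ht. apply HM. lra. }
    pose proof (Rle_abs M). pose proof (Rabs_pos M). pose proof (cond_pos eps). nra.
Qed.

Lemma RInt_1_cvg_p_infty (C : R) :
  (forall t, 1 <= t -> 0 <= f t <= C / t ^ 2) ->
  exists l, filterlim (RInt f 1) (Rbar_locally p_infty) (locally l).
Proof.
  intros HC.
  assert (HC0 : 0 <= C).
  { destruct (HC 1 (Rle_refl 1)) as [Hf1 HC1]. replace (C / 1 ^ 2) with C in HC1 by field. lra. }
  apply (Hierarchy.filterlim_locally_cauchy (F := Rbar_locally p_infty)).
  intros eps. pose proof (cond_pos eps) as Heps.
  set (B := Rmax 1 (C / eps)).
  assert (HB1 : 1 <= B) by apply Rmax_l.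
  assert (HBC : C <= B * eps).
  { replace C with (C / eps * eps) at 1 by (field; lra).
    apply Rmult_le_compat_r; [lra | apply Rmax_r]. }
  exists (fun u => B < u). split; [now exists B |].
  apply ball_RInt_1_of_le; [intros u Hu; lra |].
  intros u v Hu Hv Huv.
  assert (Hint : RInt f u v <= C / u - C / v).
  { rewrite <- (is_RInt_unique _ _ _ _ (is_RInt_const_div_sqr C u v ltac:(lra) ltac:(lra))).
    apply RInt_le; [assumption | apply ex_RInt_pos; lra | eexists; apply is_RInt_const_div_sqr; lra |].
    intros t Ht. apply HC. lra. }
  assert (Hnonneg : 0 <= RInt f u v).
  { apply RInt_ge_0; [assumption | apply ex_RInt_pos; lra |]. intros t Ht. apply HC. lra. }
  assert (0 <= C / v) by (apply Rdiv_le_0_compat; lra).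
  assert (C / u < eps).
  { apply (Rmult_lt_reg_r u); [lra |]. replace (C / u * u) with C by (field; lra). nra. }
  rewrite Rabs_pos_eq; lra.
Qed.

Lemma ex_RInt_gen_0_p_infty (M C : R) :
  (forall t, 0 < t <= 1 -> Rabs (f t) <= M) ->
  (forall t, 1 <= t -> 0 <= f t <= C / t ^ 2) ->
  exists l, is_RInt_gen f (at_right 0) (Rbar_locally p_infty) l.
Proof.
  intros HM HC.
  destruct (RInt_1_cvg_at_right_0 M HM) as [la Hla].
  destruct (RInt_1_cvg_p_infty C HC) as [lb Hlb].
  exists (lb - la). apply is_RInt_gen_0_p_infty_derive with (RInt f 1); trivial.
  intros x Hx. apply (is_derive_RInt f (RInt f 1) 1 x); [| now apply f_cont].
  apply filter_imp with (fun y => 0 < y).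
  - intros y Hy. apply (@RInt_correct R_CompleteNormedModule), ex_RInt_pos; lra.
  - now apply locally_gt_0.
Qed.

End ImproperIntegral.

Definition gamma_integrand (s t : R) : R := Rpower t (s - 1) * exp (- t).

Lemma gamma_integrand_gt_0 s t : 0 < gamma_integrand s t.
Proof. apply Rmult_lt_0_compat; [apply Rpower_gt_0 | apply exp_pos]. Qed.

Lemma is_derive_gamma_integrand_succ s t : 0 < t ->
  is_derive (gamma_integrand (s + 1)) t (s * gamma_integrand s t - gamma_integrand (s + 1) t).
Proof.
  intros Ht. unfold gamma_integrand. replace (s + 1 - 1) with s by ring.
  replace (s * (Rpower t (s - 1) * exp (- t)) - Rpower t s * exp (- t))
    with (s * Rpower t (s - 1) * exp (- t) + Rpower t s * (- exp (- t))) by ring.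
  apply (is_derive_mult (fun x => Rpower x s) (fun x => exp (- x))).
  - apply is_derive_Reals, derivable_pt_lim_power, Ht.
  - auto_derive; [trivial | ring].
  - intros; apply Rmult_comm.
Qed.

Lemma continuous_gamma_integrand s t : 0 < t -> continuous (gamma_integrand s) t.
Proof.
  intros Ht. replace s with (s - 1 + 1) by ring.
  apply (@ex_derive_continuous R_AbsRing R_NormedModule). eexists.
  now apply is_derive_gamma_integrand_succ.
Qed.

Lemma gamma_integrand_le_1 s t : 1 <= s -> 0 < t <= 1 -> gamma_integrand s t <= 1.
Proof.
  intros Hs Ht. unfold gamma_integrand.
  assert (Rpower t (s - 1) <= 1).
  { rewrite <- (Rpower_O t) at 2 by lra. apply Rpower_le_Rpower_base_le_1; lra. }
  assert (exp (- t) <= 1) by (rewrite <- exp_0; apply exp_le_exp_of_le; lra).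
  pose proof (Rpower_gt_0 t (s - 1)). pose proof (exp_pos (- t)). nra.
Qed.

Lemma gamma_integrand_le_div_sqr s : 1 <= s ->
  exists C, forall t, 1 <= t -> 0 <= gamma_integrand s t <= C / t ^ 2.
Proof.
  intros Hs. destruct (Rpower_mul_exp_le_inv_sqr (s - 1)) as [C HC]; [lra |].
  exists C. intros t Ht. split; [left; apply gamma_integrand_gt_0 | now apply HC].
Qed.

Lemma filterlim_p_infty_0_of_le_div_sqr (g : R -> R) (C : R) :
  (forall t, 1 <= t -> 0 <= g t <= C / t ^ 2) ->
  filterlim g (Rbar_locally p_infty) (locally 0).
Proof.
  intros Hg. apply filterlim_locally. intros eps. pose proof (cond_pos eps) as Heps.
  exists (Rmax 1 (C / eps)). intros t Ht.
  pose proof (Rmax_l 1 (C / eps)). pose proof (Rmax_r 1 (C / eps)).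
  destruct (Hg t ltac:(lra)) as [Hg0 HgC].
  change (Rabs (g t - 0) < eps). rewrite Rminus_0_r, Rabs_pos_eq by exact Hg0.
  assert (HC : 0 <= C) by (apply Rmult_le_reg_r with (/ t ^ 2); [apply Rinv_0_lt_compat, pow_lt |]; lra).
  assert (C < eps * t) by (replace C with (C / eps * eps) at 1 by (field; lra); nra).
  eapply Rle_lt_trans; [exact HgC |].
  apply (Rmult_lt_reg_r (t ^ 2)); [apply pow_lt; lra |].
  replace (C / t ^ 2 * t ^ 2) with C by (field; lra).
  simpl. nra.
Qed.

Lemma gamma_integrand_succ_cvg_0 s : 1 <= s ->
  filterlim (gamma_integrand (s + 1)) (at_right 0) (locally 0).
Proof.
  intros Hs. apply filterlim_locally. intros eps.
  assert (Hd : 0 < Rmin 1 eps) by (apply Rmin_glb_lt; [lra | apply cond_pos]).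
  exists (mkposreal _ Hd). intros t Ht Ht0.
  change (Rabs (t - 0) < Rmin 1 eps) in Ht.
  rewrite Rminus_0_r, Rabs_pos_eq in Ht by lra.
  pose proof (Rmin_l 1 eps). pose proof (Rmin_r 1 eps).
  change (Rabs (gamma_integrand (s + 1) t - 0) < eps).
  rewrite Rminus_0_r, Rabs_pos_eq by (left; apply gamma_integrand_gt_0).
  unfold gamma_integrand. replace (s + 1 - 1) with s by ring.
  assert (Rpower t s <= t).
  { rewrite <- (Rpower_1 t) at 2 by lra. apply Rpower_le_Rpower_base_le_1; lra. }
  assert (exp (- t) <= 1) by (rewrite <- exp_0; apply exp_le_exp_of_le; lra).
  pose proof (Rpower_gt_0 t s). pose proof (exp_pos (- t)). nra.
Qed.

Lemma ex_Gamma s : 1 <= s ->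
  exists l, is_RInt_gen (gamma_integrand s) (at_right 0) (Rbar_locally p_infty) l.
Proof.
  intros Hs. destruct (gamma_integrand_le_div_sqr s Hs) as [C HC].
  apply (ex_RInt_gen_0_p_infty _ (continuous_gamma_integrand s) 1 C); [| exact HC].
  intros t Ht. pose proof (gamma_integrand_gt_0 s t).
  rewrite Rabs_pos_eq by lra. now apply gamma_integrand_le_1.
Qed.

(* Integration by parts: the boundary term [t ^ s * exp (- t)] vanishes at both ends. *)
Lemma is_RInt_gen_gamma_integrand_succ s l : 1 <= s ->
  is_RInt_gen (gamma_integrand s) (at_right 0) (Rbar_locally p_infty) l ->
  is_RInt_gen (gamma_integrand (s + 1)) (at_right 0) (Rbar_locally p_infty) (s * l).
Proof.
  intros Hs Hl.
  assert (Hparts : is_RInt_gen (fun t => s * gamma_integrand s t - gamma_integrand (s + 1) t)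
            (at_right 0) (Rbar_locally p_infty) (0 - 0)).
  { destruct (gamma_integrand_le_div_sqr (s + 1)) as [C HC]; [lra |].
    apply is_RInt_gen_0_p_infty_derive with (gamma_integrand (s + 1)).
    - now apply is_derive_gamma_integrand_succ.
    - intros x Hx. apply (continuous_minus (V := R_NormedModule));
        [apply (continuous_scal_r (V := R_NormedModule)) |]; now apply continuous_gamma_integrand.
    - now apply gamma_integrand_succ_cvg_0.
    - exact (filterlim_p_infty_0_of_le_div_sqr _ C HC). }
  assert (Hdiff := is_RInt_gen_minus _ _ _ _ (is_RInt_gen_scal _ s _ Hl) Hparts).
  replace (s * l) with (minus (scal s l) (0 - 0))
    by (unfold minus, plus, opp, scal; simpl; unfold mult; simpl; ring).
  eapply is_RInt_gen_ext; [| exact Hdiff].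
  apply filter_forall. intros ab x _. unfold minus, plus, opp, scal; simpl; unfold mult; simpl. ring.
Qed.

Lemma Gamma_succ s : 1 <= s -> Gamma (s + 1) = s * Gamma s.
Proof.
  intros Hs. destruct (ex_Gamma s Hs) as [l Hl].
  unfold Gamma. fold (gamma_integrand (s + 1)). fold (gamma_integrand s).
  rewrite (is_RInt_gen_unique _ _ Hl).
  now rewrite (is_RInt_gen_unique _ _ (is_RInt_gen_gamma_integrand_succ s l Hs Hl)).
Qed.

Fixpoint pochhammer (c : R) (k : nat) : R :=
  match k with
  | O => 1
  | S k => pochhammer c k * (c + INR k)
  end.

Lemma pochhammer_gt_0 c k : 0 < c -> 0 < pochhammer c k.
Proof.
  intros Hc. induction k as [| k IH]; simpl; [lra |].
  apply Rmult_lt_0_compat; [exact IH |]. pose proof (pos_INR k). lra.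
Qed.

Lemma Gamma_add_nat s k : 1 <= s -> Gamma (s + INR k) = pochhammer s k * Gamma s.
Proof.
  intros Hs. induction k as [| k IH]; simpl pochhammer.
  - simpl. rewrite Rplus_0_r. ring.
  - rewrite S_INR, <- Rplus_assoc, Gamma_succ, IH by (pose proof (pos_INR k); lra). ring.
Qed.

Lemma sum_f_R0_shift_eq (v w : nat -> R) n : v 0%nat = 0 -> w n = 0 ->
  (forall j, (j < n)%nat -> v (S j) = w j) -> sum_f_R0 v n = sum_f_R0 w n.
Proof.
  intros Hv Hw Hvw. destruct n as [| n]; [simpl; lra |].
  rewrite decomp_sum, tech5 by lia. simpl Nat.pred.
  rewrite (sum_eq (fun i => v (S i)) w n); [lra |].
  intros i Hi. apply Hvw. lia.
Qed.

Lemma sum_f_R0_le_is_series (d : nat -> R) (L : R) n :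
  (forall k, 0 <= d k) -> is_series d L -> sum_f_R0 d n <= L.
Proof.
  intros Hd HL.
  apply (is_lim_seq_le_loc (fun _ => sum_f_R0 d n) (sum_n d) (sum_f_R0 d n) L);
    [| apply is_lim_seq_const | exact HL].
  exists n. intros m Hm. rewrite sum_n_Reals.
  replace m with (n + (m - n))%nat by lia. induction (m - n)%nat as [| k IH].
  - rewrite Nat.add_0_r. lra.
  - rewrite Nat.add_succ_r, tech5. specialize (Hd (S (n + k))). lra.
Qed.

Lemma is_series_gt_0 (d : nat -> R) (L : R) :
  (forall k, 0 < d k) -> is_series d L -> 0 < L.
Proof.
  intros Hd HL.
  pose proof (sum_f_R0_le_is_series d L 0 (fun k => Rlt_le _ _ (Hd k)) HL) as Hd0.
  simpl in Hd0. pose proof (Hd 0%nat). lra.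
Qed.

Lemma is_series_shift (u : nat -> R) (l : R) :
  u 0%nat = 0 -> is_series (fun k => u (S k)) l -> is_series u l.
Proof.
  intros Hu0 Hu. apply is_series_decr_1.
  rewrite Hu0. unfold plus, opp; simpl. now rewrite Ropp_0, Rplus_0_r.
Qed.

Section Turan.

Variables (nu y : R) (a : nat -> R).
Hypothesis nu_ge_0 : 0 <= nu.
Hypothesis y_gt_0 : 0 < y.
Hypothesis a_gt_0 : forall k, 0 < a k.
Hypothesis a_succ : forall k, (INR k + 1) * (INR k + nu + 1) * a (S k) = y ^ 2 * a k.

Lemma a_succ_prod n j : (j < n)%nat ->
  (INR j + 1) * (INR j + 1 + nu) * a (S j) * a (n - S j)%nat =
  (INR n - INR j) * (INR n - INR j + nu) * a j * a (n - j)%nat.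
Proof.
  intros Hj. set (m := (n - S j)%nat).
  replace (n - j)%nat with (S m) by (unfold m; lia).
  replace (INR n - INR j) with (INR m + 1)
    by (rewrite <- S_INR, <- minus_INR by lia; f_equal; unfold m; lia).
  transitivity (y ^ 2 * a j * a m); [rewrite <- a_succ; ring |].
  replace (y ^ 2 * a j * a m) with (a j * (y ^ 2 * a m)) by ring.
  rewrite <- (a_succ m). ring.
Qed.

(* For every [h] the sum telescopes: term [j + 1] of the first part cancels term [j] of the second. *)
Lemma sum_a_prod_null n (h : R -> R) :
  sum_f_R0 (fun j => a j * a (n - j)%nat *
    (INR j * (INR j + nu) * h (INR j - 1) - (INR n - INR j) * (INR n - INR j + nu) * h (INR j))) n = 0.
Proof.
  rewrite (sum_eq _ (fun j => a j * a (n - j)%nat * (INR j * (INR j + nu) * h (INR j - 1))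
     - a j * a (n - j)%nat * ((INR n - INR j) * (INR n - INR j + nu) * h (INR j))))
    by (intros; ring).
  rewrite minus_sum, (sum_f_R0_shift_eq
    (fun j => a j * a (n - j)%nat * (INR j * (INR j + nu) * h (INR j - 1)))
    (fun j => a j * a (n - j)%nat * ((INR n - INR j) * (INR n - INR j + nu) * h (INR j)))).
  - ring.
  - simpl. ring.
  - replace (INR n - INR n) with 0 by ring. ring.
  - intros j Hj. rewrite S_INR. replace (INR j + 1 - 1) with (INR j) by ring.
    transitivity ((INR j + 1) * (INR j + 1 + nu) * a (S j) * a (n - S j)%nat * h (INR j)); [ring |].
    rewrite a_succ_prod by exact Hj. ring.
Qed.

(* [a j * a (n - j) * turan_weight j (n - j)] collects the [n]-th Cauchy-product terms of
   [Sa * (y ^ 2 * Sa) - (y ^ 2 * Ua) ^ 2 - (y ^ 2 * Ua) * Sa / 2], see [is_series_turan_term]. *)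
Definition turan_weight (J L : R) : R := L * (L + nu) - J * L - J / 2.

Definition turan_term (n : nat) : R :=
  sum_f_R0 (fun j => a j * a (n - j)%nat * turan_weight (INR j) (INR (n - j))) n.

(* Modulo the null sums of [sum_a_prod_null] for [h = 1] and [h t = 2 t - n + 1],
   the weight [turan_weight j (n - j)] is the constant [rho >= 0]. *)
Lemma turan_term_ge_0 n : 0 <= turan_term n.
Proof.
  unfold turan_term. destruct n as [| n'].
  - simpl. unfold turan_weight. simpl. pose proof (a_gt_0 0). nra.
  - set (n := S n'). set (N := INR n).
    assert (HN : 1 <= N) by (unfold N, n; rewrite S_INR; pose proof (pos_INR n'); lra).
    set (alpha := 1 / (2 * N + 2 * nu - 1)).
    set (beta := - ((N + nu) / 2 + 1 / 4) / (N + nu)).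
    set (rho := N * (nu + nu * N + (nu - 1 / 2) ^ 2) / (2 * N + 2 * nu - 1)).
    pose proof (sum_a_prod_null n (fun t => 2 * t - N + 1)) as Null1.
    pose proof (sum_a_prod_null n (fun _ => 1)) as Null2.
    cbv beta in Null1, Null2. fold N in Null1, Null2.
    rewrite (sum_eq _ (fun j =>
       a j * a (n - j)%nat * (INR j * (INR j + nu) * (2 * (INR j - 1) - N + 1)
                              - (N - INR j) * (N - INR j + nu) * (2 * INR j - N + 1)) * alpha
     + a j * a (n - j)%nat * (INR j * (INR j + nu) * 1 - (N - INR j) * (N - INR j + nu) * 1) * beta
     + a j * a (n - j)%nat * rho)).
    2: { intros j Hj. rewrite minus_INR by exact Hj. fold N. unfold turan_weight, alpha, beta, rho.
         field. repeat split; lra. }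
    rewrite !plus_sum, <- !scal_sum, Null1, Null2, !Rmult_0_r, !Rplus_0_l.
    apply Rmult_le_pos.
    + unfold rho. apply Rdiv_le_0_compat; [| lra].
      pose proof (pow2_ge_0 (nu - 1 / 2)). apply Rmult_le_pos; nra.
    + apply cond_pos_sum. intros k. left. apply Rmult_lt_0_compat; apply a_gt_0.
Qed.

Lemma turan_term_1_gt_0 : 0 < turan_term 1.
Proof.
  unfold turan_term, turan_weight. simpl.
  pose proof (Rmult_lt_0_compat _ _ (a_gt_0 0) (a_gt_0 1)). nra.
Qed.

Lemma ex_series_a : ex_series a.
Proof.
  apply ex_series_Rabs, (ex_series_DAlembert a 0); [lra | intros n; apply Rgt_not_eq, a_gt_0 |].
  apply is_lim_seq_le_le_loc with (fun _ => 0) (fun n => y ^ 2 * / INR n);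
    [| apply is_lim_seq_const |].
  - exists 1%nat. intros n Hn.
    assert (1 <= INR n) by (apply (le_INR 1); lia).
    assert (Hratio : a (S n) / a n = y ^ 2 / ((INR n + 1) * (INR n + nu + 1))).
    { pose proof (a_succ n) as Hsucc. pose proof (a_gt_0 n).
      assert (0 < (INR n + 1) * (INR n + nu + 1)) by nra.
      apply (Rmult_eq_reg_r (a n * ((INR n + 1) * (INR n + nu + 1))));
        [| apply Rgt_not_eq, Rmult_lt_0_compat; lra].
      field_simplify; [rewrite (Rmult_comm (a n)), <- Hsucc; ring | split | ]; lra. }
    rewrite Hratio, Rabs_pos_eq.
    + split; [apply Rdiv_le_0_compat; [apply pow2_ge_0 | nra] |].
      unfold Rdiv. apply Rmult_le_compat_l; [apply pow2_ge_0 |].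
      apply Rinv_le_contravar; nra.
    + apply Rdiv_le_0_compat; [apply pow2_ge_0 | nra].
  - replace (Finite 0) with (Rbar_mult (y ^ 2) (Rbar_inv p_infty)) by (simpl; f_equal; ring).
    apply is_lim_seq_scal_l, is_lim_seq_inv; [apply is_lim_seq_INR | discriminate].
Qed.

Lemma ex_series_a_div : ex_series (fun k => a k / (INR k + nu + 1)).
Proof.
  apply (@ex_series_le R_AbsRing R_CompleteNormedModule) with a; [| exact ex_series_a].
  intros n. change (Rabs (a n / (INR n + nu + 1)) <= a n).
  pose proof (a_gt_0 n). pose proof (pos_INR n).
  rewrite Rabs_pos_eq by (apply Rdiv_le_0_compat; lra).
  apply Rmult_le_reg_r with (INR n + nu + 1); [lra |].
  replace (a n / (INR n + nu + 1) * (INR n + nu + 1)) with (a n) by (field; lra). nra.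
Qed.

Lemma is_series_index_mul (Ua : R) : is_series (fun k => a k / (INR k + nu + 1)) Ua ->
  is_series (fun k => INR k * a k) (y ^ 2 * Ua).
Proof.
  intros HU. apply is_series_shift; [simpl; ring |].
  eapply is_series_ext; [| apply (is_series_scal_l (V := R_NormedModule)), HU].
  intros k. change (y ^ 2 * (a k / (INR k + nu + 1)) = INR (S k) * a (S k)).
  pose proof (a_succ k). pose proof (pos_INR k). rewrite S_INR.
  field_simplify_eq; [nra | lra].
Qed.

Lemma is_series_index_sq_mul (Sa : R) : is_series a Sa ->
  is_series (fun k => INR k * (INR k + nu) * a k) (y ^ 2 * Sa).
Proof.
  intros HS. apply is_series_shift; [simpl; ring |].
  eapply is_series_ext; [| apply (is_series_scal_l (V := R_NormedModule)), HS].
  intros k. change (y ^ 2 * a k = INR (S k) * (INR (S k) + nu) * a (S k)).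
  rewrite <- a_succ, S_INR. ring.
Qed.

Lemma is_series_turan_term (Sa Ua : R) :
  is_series a Sa -> is_series (fun k => a k / (INR k + nu + 1)) Ua ->
  is_series turan_term (Sa * (y ^ 2 * Sa) - y ^ 2 * Ua * (y ^ 2 * Ua) - / 2 * (y ^ 2 * Ua * Sa)).
Proof.
  intros HS HU.
  assert (Ha : forall k, 0 <= a k) by (intros k; left; apply a_gt_0).
  assert (Hi : forall k, 0 <= INR k * a k)
    by (intros k; apply Rmult_le_pos; [apply pos_INR | apply Ha]).
  assert (Hii : forall k, 0 <= INR k * (INR k + nu) * a k)
    by (intros k; pose proof (pos_INR k); apply Rmult_le_pos; [nra | apply Ha]).
  pose proof (is_series_index_mul Ua HU) as HiU.
  pose proof (is_series_mult_pos _ _ _ _ HS (is_series_index_sq_mul Sa HS) Ha Hii) as P1.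
  pose proof (is_series_mult_pos _ _ _ _ HiU HiU Hi Hi) as P2.
  pose proof (is_series_scal_l (V := R_NormedModule) (/ 2) _ _
    (is_series_mult_pos _ _ _ _ HiU HS Hi Ha)) as P3.
  pose proof (is_series_minus _ _ _ _ (is_series_minus _ _ _ _ P1 P2) P3) as P.
  eapply is_series_ext; [| exact P].
  intros n. unfold turan_term, plus, opp, scal; simpl; unfold mult; simpl.
  rewrite <- !Rminus_def, scal_sum, <- !minus_sum. apply sum_eq. intros j Hj.
  unfold turan_weight. rewrite minus_INR by exact Hj. field.
Qed.

Theorem turan_ineq (Sa Ua : R) :
  is_series a Sa -> is_series (fun k => a k / (INR k + nu + 1)) Ua ->
  y ^ 2 * Ua ^ 2 + Ua * Sa / 2 < Sa ^ 2.
Proof.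
  intros HS HU.
  pose proof (sum_f_R0_le_is_series turan_term _ 1 turan_term_ge_0
    (is_series_turan_term Sa Ua HS HU)) as Hpartial.
  simpl in Hpartial. pose proof (turan_term_ge_0 0). pose proof turan_term_1_gt_0.
  assert (0 < y ^ 2) by (apply pow_lt, y_gt_0).
  nra.
Qed.

End Turan.

Definition bessel_coeff (nu y : R) (k : nat) : R :=
  Rpower y (2 * INR k + nu) / (INR (fact k) * pochhammer (nu + 1) k).

Lemma bessel_coeff_gt_0 nu y k : 0 <= nu -> 0 < bessel_coeff nu y k.
Proof.
  intros Hnu. apply Rdiv_lt_0_compat; [apply Rpower_gt_0 |].
  apply Rmult_lt_0_compat; [apply lt_0_INR, lt_O_fact | apply pochhammer_gt_0; lra].
Qed.

Lemma bessel_coeff_succ nu y k : 0 <= nu -> 0 < y ->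
  (INR k + 1) * (INR k + nu + 1) * bessel_coeff nu y (S k) = y ^ 2 * bessel_coeff nu y k.
Proof.
  intros Hnu Hy. unfold bessel_coeff. simpl pochhammer.
  rewrite fact_simpl, mult_INR, S_INR.
  replace (2 * (INR k + 1) + nu) with (2 * INR k + nu + INR 2) by (simpl; ring).
  rewrite Rpower_plus, Rpower_pow by exact Hy.
  pose proof (pos_INR k). pose proof (pochhammer_gt_0 (nu + 1) k ltac:(lra)).
  assert (0 < INR (fact k)) by apply lt_0_INR, lt_O_fact.
  field. repeat split; apply Rgt_not_eq; lra.
Qed.

Lemma BesselI_eq nu x : 0 <= nu ->
  BesselI nu x = Series (bessel_coeff nu (x / 2)) / Gamma (nu + 1).
Proof.
  intros Hnu. unfold BesselI. rewrite (Rdiv_def (Series _)), <- Series_scal_r.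
  apply Series_ext. intros k. unfold bessel_coeff.
  replace (INR k + nu + 1) with (nu + 1 + INR k) by ring.
  rewrite Gamma_add_nat by lra. unfold Rdiv. rewrite !Rinv_mult. ring.
Qed.

Lemma BesselI_succ_eq nu x : 0 <= nu -> 0 < x ->
  BesselI (nu + 1) x =
  x / 2 * Series (fun k => bessel_coeff nu (x / 2) k / (INR k + nu + 1)) / Gamma (nu + 1).
Proof.
  intros Hnu Hx. unfold BesselI. rewrite (Rdiv_def (_ * Series _)), <- Series_scal_l, <- Series_scal_r.
  apply Series_ext. intros k. unfold bessel_coeff.
  replace (INR k + (nu + 1) + 1) with (nu + 1 + INR (S k)) by (rewrite S_INR; ring).
  replace (2 * INR k + (nu + 1)) with (2 * INR k + nu + 1) by ring.
  rewrite Gamma_add_nat, Rpower_plus, Rpower_1 by lra. simpl pochhammer.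
  replace (nu + 1 + INR k) with (INR k + nu + 1) by ring.
  unfold Rdiv. rewrite !Rinv_mult. ring.
Qed.

Lemma Series_bessel_coeff_eq_of_Psi nu K r : 0 <= nu -> 0 < K -> 0 < r ->
  r = Psi nu (2 * K * r) ->
  Series (bessel_coeff nu (K * r)) =
  K * Series (fun k => bessel_coeff nu (K * r) k / (INR k + nu + 1)).
Proof.
  intros Hnu HK Hr Heq. unfold Psi in Heq.
  rewrite BesselI_succ_eq, BesselI_eq in Heq by nra.
  replace (2 * K * r / 2) with (K * r) in Heq by field.
  set (Sa := Series (bessel_coeff nu (K * r))) in Heq |- *.
  set (Ua := Series (fun k => _)) in Heq |- *.
  assert (Hden : Sa / Gamma (nu + 1) <> 0).
  { intros Hden0. rewrite Hden0, Rdiv_0_r in Heq. lra. }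
  assert (Hg : Gamma (nu + 1) <> 0) by (intros Hg; apply Hden; rewrite Hg; apply Rdiv_0_r).
  assert (HSa : Sa <> 0) by (intros HS; apply Hden; rewrite HS; apply Rdiv_0_l).
  apply (Rmult_eq_reg_l r); [| lra].
  rewrite Heq at 1. field. split; assumption.
Qed.

Theorem mainTheorem4 (nu K r : R) :
  0 <= nu -> nu + 1 < K -> 0 < r -> r = Psi nu (2 * K * r) ->
  r < sqrt (1 - 1 / (2 * K)).
Proof.
  intros Hnu HK Hr Heq.
  assert (HK0 : 0 < K) by lra.
  pose proof (Series_bessel_coeff_eq_of_Psi nu K r Hnu HK0 Hr Heq) as HSU.
  set (y := K * r) in HSU. assert (Hy : 0 < y) by (unfold y; nra).
  set (b := bessel_coeff nu y) in HSU.
  assert (Hb : forall k, 0 < b k) by (intros k; now apply bessel_coeff_gt_0).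
  assert (Hrec : forall k, (INR k + 1) * (INR k + nu + 1) * b (S k) = y ^ 2 * b k)
    by (intros k; now apply bessel_coeff_succ).
  pose proof (Series_correct _ (ex_series_a nu y b Hnu Hb Hrec)) as HS.
  pose proof (Series_correct _ (ex_series_a_div nu y b Hnu Hb Hrec)) as HU.
  pose proof (is_series_gt_0 b _ Hb HS) as HSa.
  pose proof (turan_ineq nu y b Hnu Hy Hb Hrec _ _ HS HU) as Hturan.
  set (Ua := Series (fun k => _)) in HSU, HU, Hturan. rewrite HSU in HSa, Hturan. unfold y in Hturan.
  assert (HUa : 0 < Ua) by nra.
  assert (Hr2 : r ^ 2 < 1 - 1 / (2 * K)).
  { apply (Rmult_lt_reg_r (K ^ 2 * Ua ^ 2)); [nra |].
    replace ((1 - 1 / (2 * K)) * (K ^ 2 * Ua ^ 2)) with (K ^ 2 * Ua ^ 2 - Ua * (K * Ua) / 2)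
      by (field; lra).
    nra. }
  rewrite <- (sqrt_pow2 r) by lra. apply sqrt_lt_1_alt. split; [apply pow2_ge_0 | exact Hr2].
Qed.
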